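(* Let $K>0$, $S=1/K$, and let $\eta:(0,K]\to[0,\infty)$ with $\eta(K)=0$; set $\phi(k)=k\eta(k)$ (with $\phi(0)=0$) and $\theta(s)=\eta(1/s)$ for $s\ge S$. Let $\Delta t,\Delta N>0$ and consider a platoon of vehicles $m=0,1,\dots,M$ ($M\ge 1$), vehicle $m-1$ being the leader of vehicle $m$, with positions $Y_m^j$ at times $j\Delta t$. The lead vehicle $0$ follows an arbitrary prescribed trajectory with $Y_0^{j+1}\ge Y_0^j$ for all $j$, and for $m\ge1$ $$Y_m^{j+1}=Y_m^j+\Delta t\,\theta\!\left(\frac{Y_{m-1}^j-Y_m^j}{\Delta N}\right).$$ Call the model collision-free if for every such leader trajectory and every initial configuration with $Y_{m-1}^0-Y_m^0\ge S\Delta N$ for all $m\ge1$, one has $Y_{m-1}^j-Y_m^j\ge S\Delta N$ for all $m\ge 1$ and all $j\ge0$. Then the model is collision-free if and only if $$\frac{\Delta N}{\Delta t}\ \ge\ \sup_{k\in[0,K)}\frac{\phi(k)}{1-k/K}.$$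
   Context: $\eta$ is the speed-density relation, $\phi$ the flow-density relation, $\theta$ the speed-spacing relation, $K$ the jam density and $S$ the jam spacing; the update rule is the time- and vehicle-discrete car-following formulation of the nonstandard second-order (LWR) model, with $\Delta N$ the vehicle step and $\Delta t$ the time step. *)

From Stdlib Require Import Reals Lra.
Open Scope R_scope.

Definition jam_spacing (K : R) : R := / K.

Definition phi (eta : R -> R) (k : R) : R := k * eta k.

Definition theta (eta : R -> R) (s : R) : R := eta (/ s).

(* Standing hypotheses on eta : (0,K] -> [0,oo) with eta(K) = 0.
   eta is a total function R -> R; values outside (0,K] are irrelevant. *)
Definition eta_admissible (K : R) (eta : R -> R) : Prop :=
  0 < K /\ (forall k, 0 < k <= K -> 0 <= eta k) /\ eta K = 0.

(* Y m j = position of vehicle m at time j * dt; vehicle 0 is the leader. *)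
Definition platoon_trajectory (eta : R -> R) (dt dN : R) (M : nat)
    (Y : nat -> nat -> R) : Prop :=
  (forall j, Y 0%nat j <= Y 0%nat (S j)) /\
  (forall m j, (1 <= m <= M)%nat ->
     Y m (S j) = Y m j + dt * theta eta ((Y (pred m) j - Y m j) / dN)).

Definition collision_free (K : R) (eta : R -> R) (dt dN : R) (M : nat) : Prop :=
  forall Y : nat -> nat -> R,
    platoon_trajectory eta dt dN M Y ->
    (forall m, (1 <= m <= M)%nat -> Y (pred m) 0%nat - Y m 0%nat >= jam_spacing K * dN) ->
    forall m j, (1 <= m <= M)%nat -> Y (pred m) j - Y m j >= jam_spacing K * dN.

From Stdlib Require Import Reals Lra Lia.
Open Scope R_scope.

(* Both conditions are equivalent to safety behind a stopped leader: a follower at gap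
   s >= S dN keeps a gap s - dt theta(s/dN) >= S dN after one step.  Substituting the
   density k = dN/s turns this inequality into dN/dt >= phi(k)/(1 - k/K).  The condition
   is sufficient because every leader in the platoon moves forward (theta >= 0 at safe
   gaps), which can only widen its follower's gap.  It is necessary because a stopped
   lead vehicle followed by a platoon uniformly spaced at s realises exactly that gap
   for vehicle 1 after one step. *)

Lemma flux_bound_iff_gap (K k e dt dN : R) :
  0 < dt -> 0 < dN -> 0 < k < K ->
  (dN / dt >= k * e / (1 - k / K) <-> dN / k - dt * e >= dN / K).
Proof.
  intros Hdt HdN Hk.
  assert (Hc : 0 < dt * (K - k) / (K * k)).
  { apply Rdiv_lt_0_compat; apply Rmult_lt_0_compat; lra. }
  (* the two differences agree up to the positive factor dt (K - k) / (K k) *)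
  assert (Hid : (dN / dt - k * e / (1 - k / K)) * (dt * (K - k) / (K * k))
                = dN / k - dt * e - dN / K) by (field; lra).
  split; intros H; nra.
Qed.

Lemma density_of_spacing_bounds (K dN s : R) :
  0 < K -> 0 < dN -> s >= jam_spacing K * dN -> 0 < / (s / dN) <= K.
Proof.
  unfold jam_spacing. intros HK HdN Hs.
  assert (HiK : 0 < / K) by now apply Rinv_0_lt_compat.
  assert (Hx : / K <= s / dN).
  { apply (Rmult_le_reg_r dN); auto. unfold Rdiv. rewrite Rmult_assoc, Rinv_l; lra. }
  split; [apply Rinv_0_lt_compat; lra|].
  rewrite <- (Rinv_inv K). now apply Rinv_le_contravar.
Qed.

Lemma theta_nonneg (K : R) (eta : R -> R) (dN s : R) :
  eta_admissible K eta -> 0 < dN ->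
  s >= jam_spacing K * dN -> 0 <= theta eta (s / dN).
Proof.
  intros [HK [Heta _]] HdN Hs. now apply Heta, (density_of_spacing_bounds K dN).
Qed.

Definition stopped_leader_safe (K : R) (eta : R -> R) (dt dN : R) : Prop :=
  forall s, s >= jam_spacing K * dN -> s - dt * theta eta (s / dN) >= jam_spacing K * dN.

Lemma flux_bound_iff_stopped_leader_safe (K : R) (eta : R -> R) (dt dN : R) :
  eta_admissible K eta -> 0 < dt -> 0 < dN ->
  (stopped_leader_safe K eta dt dN <->
   (forall k, 0 <= k < K -> dN / dt >= phi eta k / (1 - k / K))).
Proof.
  intros Hadm Hdt HdN. pose proof Hadm as [HK [_ HetaK]].
  unfold stopped_leader_safe, jam_spacing, phi, theta. split.
  - intros Hsafe k Hk. destruct (Req_dec k 0) as [->|Hk0].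
    + rewrite Rmult_0_l, Rdiv_0_l. apply Rle_ge, Rlt_le, Rdiv_lt_0_compat; auto.
    + apply flux_bound_iff_gap; auto; [lra|].
      assert (Hs : / K * dN <= dN / k).
      { rewrite Rmult_comm. apply Rmult_le_compat_l; [lra|].
        apply Rlt_le, Rinv_lt_contravar; [apply Rmult_lt_0_compat|]; lra. }
      specialize (Hsafe (dN / k) (Rle_ge _ _ Hs)).
      replace (dN / k / dN) with (/ k) in Hsafe by (field; lra).
      rewrite Rinv_inv in Hsafe. lra.
  - intros Hbound s Hs.
    pose proof (density_of_spacing_bounds K dN s HK HdN Hs) as Hk.
    set (k := / (s / dN)) in *.
    assert (Hs0 : 0 < s) by (pose proof (Rinv_0_lt_compat K HK); nra).
    assert (Hsk : s = dN / k) by (unfold k; field; split; lra).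
    destruct (Req_dec k K) as [->|HkK]; [rewrite HetaK; lra|].
    specialize (Hbound k ltac:(lra)).
    apply flux_bound_iff_gap in Hbound; [|auto|auto|lra].
    rewrite Hsk at 1. lra.
Qed.

Lemma stopped_leader_safe_collision_free (K : R) (eta : R -> R) (dt dN : R) (M : nat) :
  eta_admissible K eta -> 0 < dt -> 0 < dN ->
  stopped_leader_safe K eta dt dN -> collision_free K eta dt dN M.
Proof.
  intros Hadm Hdt HdN Hsafe Y [Hlead Hstep] Hinit m j. revert m.
  induction j as [|j IH]; [exact Hinit|]. intros m Hm.
  assert (Hadvance : Y (pred m) j <= Y (pred m) (S j)).
  { destruct m as [|[|m]]; [lia|apply Hlead|].
    simpl pred. rewrite (Hstep (S m) j ltac:(lia)).
    pose proof (theta_nonneg K eta dN _ Hadm HdN (IH (S m) ltac:(lia))) as Hspeed.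
    pose proof (Rmult_le_pos dt _ (Rlt_le _ _ Hdt) Hspeed). lra. }
  pose proof (Hsafe _ (IH m Hm)). rewrite (Hstep m j Hm). lra.
Qed.

Fixpoint platoon_solution (eta : R -> R) (dt dN : R) (lead init : nat -> R) (j : nat)
    : nat -> R :=
  fun m =>
    match m, j with
    | O, _ => lead j
    | S _, O => init m
    | S _, S j' =>
        platoon_solution eta dt dN lead init j' m
        + dt * theta eta ((platoon_solution eta dt dN lead init j' (pred m)
                           - platoon_solution eta dt dN lead init j' m) / dN)
    end.

Lemma platoon_solution_trajectory (eta : R -> R) (dt dN : R) (M : nat) (lead init : nat -> R) :
  (forall j, lead j <= lead (S j)) ->
  platoon_trajectory eta dt dN M (fun m j => platoon_solution eta dt dN lead init j m).
Proof.
  intros Hlead. split.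
  - intros [|j]; exact (Hlead _).
  - intros [|m] j Hm; [lia|reflexivity].
Qed.

Lemma collision_free_stopped_leader_safe (K : R) (eta : R -> R) (dt dN : R) (M : nat) :
  (1 <= M)%nat -> collision_free K eta dt dN M -> stopped_leader_safe K eta dt dN.
Proof.
  intros HM Hcf s Hs.
  set (Y := fun m j => platoon_solution eta dt dN (fun _ => 0) (fun m => - INR m * s) j m).
  assert (Hinit : forall m, (1 <= m <= M)%nat -> Y (pred m) 0%nat - Y m 0%nat >= jam_spacing K * dN).
  { intros [|[|m]] Hm; [lia| |]; unfold Y; simpl; rewrite ?S_INR; simpl; lra. }
  pose proof (Hcf Y (platoon_solution_trajectory _ _ _ _ _ _ (fun _ => Rle_refl 0)) Hinit
                1%nat 1%nat ltac:(lia)) as Hgap.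
  unfold Y in Hgap. simpl in Hgap.
  replace ((0 - - (1) * s) / dN) with (s / dN) in Hgap by (f_equal; ring).
  lra.
Qed.

Theorem theorem4p2 (K : R) (eta : R -> R) (dt dN : R) (M : nat) :
  eta_admissible K eta -> 0 < dt -> 0 < dN -> (1 <= M)%nat ->
  (collision_free K eta dt dN M <->
   (forall k, 0 <= k < K -> dN / dt >= phi eta k / (1 - k / K))).
Proof.
  intros Hadm Hdt HdN HM.
  rewrite <- flux_bound_iff_stopped_leader_safe by assumption.
  split.
  - exact (collision_free_stopped_leader_safe K eta dt dN M HM).
  - exact (stopped_leader_safe_collision_free K eta dt dN M Hadm Hdt HdN).
Qed.
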